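(* Let $X$ be a vector space with a separating family of seminorms $\{p_k\}_{k\in\mathbb{N}}$, equipped with the metric $d(x,y)=\max_{k\in\mathbb{N}}\Big\{2^{-k}\frac{p_k(x-y)}{1+p_k(x-y)}\Big\}$, and assume $(X,d)$ is complete. Let $\{A_n\}$ be an approximation scheme on $X$. Assume that there exist $(M_k)\subset[0,\infty)$, an infinite set $\mathbb{N}_0\subseteq\mathbb{N}$, elements $\{x_n\}_{n\in\mathbb{N}_0}\subseteq X$, $m_0\in\mathbb{N}$ and $\delta>0$ such that: (a) $p_k(x_n)\le M_k$ for all $k\in\mathbb{N}$ and $n\in\mathbb{N}_0$; (b) $E_{m_0}(x_n,A_n):=\inf_{a\in A_n}p_{m_0}(x_n-a)>\delta$ for all $n\in\mathbb{N}_0$. Then $\{A_n\}$ satisfies Shapiro's theorem on $X$.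
   Context: An approximation scheme on $X$ is a chain $A_0\subsetneq A_1\subsetneq\cdots\subsetneq X$ of subsets with: (A1) there is $K:\mathbb{N}\to\mathbb{N}$, $K(n)\ge n$, $A_n+A_n\subseteq A_{K(n)}$; (A2) $\lambda A_n\subseteq A_n$ for all scalars $\lambda$; (A3) $\bigcup_nA_n$ dense in $X$. $E(x,A)=\inf_{a\in A}d(x,a)$. $\{A_n\}$ satisfies Shapiro's theorem on $X$ if for every non-increasing sequence $\{\varepsilon_n\}$ of nonnegative reals tending to $0$ there exists $x\in X$ with $E(x,A_n)\neq\mathbf{O}(\varepsilon_n)$. *)

From HB Require Import structures.
From mathcomp Require Import all_boot all_order all_algebra.
From mathcomp Require Import all_classical all_reals.
Set Implicit Arguments. Unset Strict Implicit. Unset Printing Implicit Defensive.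
Import Order.TTheory GRing.Theory Num.Theory.
Local Open Scope classical_set_scope.
Local Open Scope ring_scope.

Section Defs.
Variables (R : realType) (X : lmodType R).

Definition seminorm (p : X -> R) : Prop :=
  (forall x y, p (x + y) <= p x + p y) /\
  (forall (l : R) x, p (l *: x) = `|l| * p x).

Definition separating (p : nat -> X -> R) : Prop :=
  forall x, (forall k, p k x = 0) -> x = 0.

(* d(x,y) = max_k 2^-k p_k(x-y)/(1+p_k(x-y)); the max is attained, so it equals the sup *)
Definition fdist (p : nat -> X -> R) (x y : X) : R :=
  sup [set (2%:R ^- k) * (p k (x - y) / (1 + p k (x - y))) | k in [set: nat]].

Definition d_complete (p : nat -> X -> R) : Prop :=
  forall u : nat -> X,
    (forall e : R, 0 < e -> exists N, forall m n, (N <= m)%N -> (N <= n)%N ->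
        fdist p (u m) (u n) < e) ->
    exists x : X, forall e : R, 0 < e -> exists N, forall n, (N <= n)%N ->
        fdist p (u n) x < e.

Definition approx_scheme (p : nat -> X -> R) (A : nat -> set X) : Prop :=
  (forall n, A n `<` A n.+1) /\
  (exists K : nat -> nat, (forall n, (n <= K n)%N) /\
      forall n a b, A n a -> A n b -> A (K n) (a + b)) /\
  (forall n (l : R) a, A n a -> A n (l *: a)) /\
  (forall (x : X) (e : R), 0 < e -> exists n a, A n a /\ fdist p x a < e).

Definition Edist (p : nat -> X -> R) (x : X) (A : set X) : R :=
  inf [set fdist p x a | a in A].

Definition bigO_seq (u v : nat -> R) : Prop :=
  exists C : R, exists N, forall n, (N <= n)%N -> `|u n| <= C * `|v n|.

Definition shapiro (p : nat -> X -> R) (A : nat -> set X) : Prop :=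
  forall eps : nat -> R,
    (forall n, 0 <= eps n) -> (forall n, eps n.+1 <= eps n) ->
    (forall e : R, 0 < e -> exists N, forall n, (N <= n)%N -> eps n < e) ->
    exists x : X, ~ bigO_seq (fun n => Edist p x (A n)) eps.

Definition Eseminorm (p : nat -> X -> R) (m : nat) (x : X) (A : set X) : R :=
  inf [set p m (x - a) | a in A].

End Defs.

From HB Require Import structures.
From mathcomp Require Import all_boot all_order all_algebra.
From mathcomp Require Import all_classical all_reals.
From mathcomp Require Import ring lra.
Import Order.TTheory GRing.Theory Num.Theory Num.Def.
Local Open Scope classical_set_scope.
Local Open Scope ring_scope.
Set Implicit Arguments. Unset Strict Implicit.

(* Gliding hump: [x0 := \sum_j c_j x_(n_j)] with [n_j] in [N0] ([hump_index]).
   At step j the partial sum [s_j] is approximated, within [c_j delta / 8] in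
   [p_m0], by some [a] in [A_(n'_j)] ([approx_index]), where [n'_j >= j] is so
   large that [(j+1) eps_(n'_j)] is tiny; then [n_j >= K n'_j] is chosen.  For
   [b] in [A_(n'_j)] the element [(b - a) / c_j] lies in [A_(n_j)], so
   [p_m0 (c_j x_(n_j) - (b - a)) >= c_j delta]; as the tail of the series after
   step j is small against [c_j delta], [p_m0 (x0 - b) >= c_j delta / 2].  Hence
   [E(x0, A_(n'_j))] is bounded below by a multiple of [c_j] exceeding
   [(j+1) eps_(n'_j)], for every j. *)

Section Seminorm.
Variables (R : realType) (X : lmodType R) (q : X -> R).
Hypothesis hq : seminorm q.

Lemma seminormD x y : q (x + y) <= q x + q y.
Proof. by case: hq. Qed.

Lemma seminormZ (l : R) x : q (l *: x) = `|l| * q x.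
Proof. by case: hq. Qed.

Lemma seminorm0 : q 0 = 0.
Proof. by rewrite -(scale0r 0) seminormZ normr0 mul0r. Qed.

Lemma seminormN x : q (- x) = q x.
Proof. by rewrite -scaleN1r seminormZ normrN normr1 mul1r. Qed.

Lemma seminorm_ge0 x : 0 <= q x.
Proof. by have := seminormD x (- x); rewrite subrr seminorm0 seminormN; lra. Qed.

Lemma seminorm_sub_le3 z s a b v :
  q (v - (b - a)) <= q (z - b) + q (z - (s + v)) + q (s - a).
Proof.
have -> : v - (b - a) = (s + v - z) + (z - b) - (s - a).
  by rewrite addrA subrK !opprB (addrC (s + v - b)) -!addrA addKr addrCA.
apply: le_trans (seminormD _ _) _; rewrite seminormN lerD2r.
by apply: le_trans (seminormD _ _) _; rewrite -(seminormN (s + v - z)) opprB addrC.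
Qed.

End Seminorm.

Section Pow2V.
Variable R : realType.

Lemma pow2V_gt0 k : 0 < (2%:R : R) ^- k.
Proof. by rewrite invr_gt0 exprn_gt0. Qed.

Lemma pow2VS k : (2%:R : R) ^- k.+1 = 2%:R ^- k / 2.
Proof. by rewrite exprSr invfM. Qed.

Lemma pow2V_le m n : (m <= n)%N -> (2%:R : R) ^- n <= 2%:R ^- m.
Proof.
move=> mn; rewrite -!exprVn; apply: ler_wiXn2l mn; first by rewrite invr_ge0.
by rewrite invf_le1 // ler1n.
Qed.

Lemma pow2V_le1 k : (2%:R : R) ^- k <= 1.
Proof. by have := @pow2V_le 0 k (leq0n k); rewrite expr0 invr1. Qed.

End Pow2V.

Section FrechetDistance.
Variables (R : realType) (X : lmodType R) (p : nat -> X -> R).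
Hypothesis hp : forall k, seminorm (p k).

Definition fdist_term (v : X) k := (2%:R : R) ^- k * (p k v / (1 + p k v)).

Definition fdist_cauchy (u : nat -> X) :=
  forall e : R, 0 < e -> exists N, forall m n, (N <= m)%N -> (N <= n)%N ->
    fdist p (u m) (u n) < e.

Lemma fdist_term_le_pow2V v k : fdist_term v k <= 2%:R ^- k.
Proof.
have t_ge0 := seminorm_ge0 (hp k) v.
by rewrite /fdist_term ler_piMr ?ltW ?pow2V_gt0 // ltr_pdivrMr; lra.
Qed.

Lemma fdist_term_le_seminorm v k : fdist_term v k <= p k v.
Proof.
have t_ge0 := seminorm_ge0 (hp k) v.
have phi_le : p k v / (1 + p k v) <= p k v by rewrite ler_pdivrMr; nra.
apply: le_trans phi_le; rewrite /fdist_term ler_piMl ?pow2V_le1 //.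
by rewrite divr_ge0 //; lra.
Qed.

Lemma fdist_term_le_fdist x y k : fdist_term (x - y) k <= fdist p x y.
Proof.
apply: ub_le_sup; last by exists k.
by exists 1 => _ [j _ <-]; apply: le_trans (fdist_term_le_pow2V _ _) (pow2V_le1 _ _).
Qed.

Lemma fdist_le x y b : (forall k, fdist_term (x - y) k <= b) -> fdist p x y <= b.
Proof.
move=> h; apply: ge_sup => [|_ [k _ <-]]; last exact: h.
by exists (fdist_term (x - y) 0), 0%N.
Qed.

Lemma seminorm_lt_of_fdist u v m (t : R) :
  0 < t -> t <= 1 / 2 -> fdist p u v < 2%:R ^- m * t -> p m (u - v) < 2 * t.
Proof.
move=> t_gt0 t_le h; have s_ge0 := seminorm_ge0 (hp m) (u - v).
have := le_lt_trans (fdist_term_le_fdist u v m) h.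
rewrite /fdist_term ltr_pM2l ?pow2V_gt0 // ltr_pdivrMr; nra.
Qed.

Lemma fdist_ge_of_seminorm u v m (t : R) :
  0 <= t -> t <= 1 -> t <= p m (u - v) -> 2%:R ^- m * (t / 2) <= fdist p u v.
Proof.
move=> t_ge0 t_le1 ht; apply: le_trans (fdist_term_le_fdist u v m).
rewrite /fdist_term ler_pM2l ?pow2V_gt0 // ler_pdivlMr; nra.
Qed.

Lemma Edist_ge_of_seminorm u (B : set X) m (t : R) :
  B !=set0 -> 0 <= t -> t <= 1 -> (forall b, B b -> t <= p m (u - b)) ->
  2%:R ^- m * (t / 2) <= Edist p u B.
Proof.
move=> [b0 Bb0] t_ge0 t_le1 h; apply: lb_le_inf; first by exists (fdist p u b0), b0.
by move=> _ [b Bb <-]; apply: fdist_ge_of_seminorm => //; exact: h.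
Qed.

Lemma Eseminorm_le m u (B : set X) a : B a -> Eseminorm p m u B <= p m (u - a).
Proof.
move=> Ba; apply: ge_inf; last by exists a.
by exists 0 => _ [b _ <-]; exact: seminorm_ge0.
Qed.

Lemma fdist_cauchy_of_tail (u : nat -> X) :
  (forall k m n, (k <= m)%N -> (m <= n)%N -> p k (u n - u m) <= 2%:R ^- m) ->
  fdist_cauchy u.
Proof.
move=> tail e e_gt0; set N := Num.bound e^-1; exists N.
have pow2VN : 2%:R ^- N < e.
  have := upper_nthrootP (leqnn N).
  by rewrite -ltf_pV2 ?posrE ?invr_gt0 ?exprn_gt0 // invrK.
have near k m n : (k <= N)%N -> (N <= m)%N -> (N <= n)%N ->
    p k (u m - u n) <= 2%:R ^- N.
  move=> kN Nm Nn; have [mn|nm] := leqP m n.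
  - rewrite -seminormN ?opprB //; apply: le_trans (tail _ _ _ (leq_trans kN Nm) mn) _.
    exact: pow2V_le.
  - apply: le_trans (tail _ _ _ (leq_trans kN Nn) (ltnW nm)) _; exact: pow2V_le.
move=> m n Nm Nn; apply: le_lt_trans pow2VN; apply: fdist_le => k.
have [kN|Nk] := leqP k N.
- exact: le_trans (fdist_term_le_seminorm _ _) (near _ _ _ kN Nm Nn).
- exact: le_trans (fdist_term_le_pow2V _ _) (pow2V_le _ (ltnW Nk)).
Qed.

End FrechetDistance.

Lemma not_bigO_seq (R : realType) (u v : nat -> R) :
  (forall n, 0 <= v n) ->
  (forall j, exists2 n, (j <= n)%N & j.+1%:R * v n < u n) ->
  ~ bigO_seq u v.
Proof.
move=> v_ge0 unbounded [C [N hC]].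
have [n jn vu] := unbounded (maxn N (Num.bound `|C|)).
have Cj : `|C| <= (maxn N (Num.bound `|C|))%:R.
  apply: le_trans (ltW (archi_boundP (normr_ge0 C))) _.
  by rewrite ler_nat leq_maxr.
have := hC n (leq_trans (leq_maxl _ _) jn).
move: vu; rewrite (ger0_norm (v_ge0 n)) -natr1.
have := ler_norm (u n); have := ler_norm C; have := v_ge0 n; nra.
Qed.

Section GlidingHump.
Variables (R : realType) (X : lmodType R) (p : nat -> X -> R) (A : nat -> set X).
Variables (K : nat -> nat) (M : nat -> R) (N0 : set nat) (x : nat -> X).
Variables (m0 : nat) (delta : R) (eps : nat -> R).
Hypotheses (hp : forall k, seminorm (p k)) (hcomp : d_complete p).
Hypothesis A_homo : {homo A : i j / (i <= j)%N >-> i `<=` j}.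
Hypothesis A_add : forall n a b, A n a -> A n b -> A (K n) (a + b).
Hypothesis A_scale : forall n (l : R) a, A n a -> A n (l *: a).
Hypothesis A_dense :
  forall (y : X) (e : R), 0 < e -> exists n a, A n a /\ fdist p y a < e.
Hypotheses (M_ge0 : forall k, 0 <= M k) (N0_infinite : infinite_set N0).
Hypotheses (delta_gt0 : 0 < delta) (delta_le1 : delta <= 1).
Hypothesis x_bounded : forall k n, N0 n -> p k (x n) <= M k.
Hypothesis x_far : forall n, N0 n -> delta < Eseminorm p m0 (x n) (A n).
Hypothesis eps_ge0 : forall n, 0 <= eps n.
Hypothesis eps_cvg0 :
  forall e : R, 0 < e -> exists N, forall n, (N <= n)%N -> eps n < e.

Definition hump_ratio := delta / (16 * (1 + M m0)).
Definition hump_weight j := 1 + \sum_(i < j.+1) M i.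
(* The weight gives [c_j M_k <= 2^-(j+1)] for [k <= j], so the series is
   d-Cauchy; the ratio keeps the [p_m0]-tail after step j below [c_j delta / 8]. *)
Definition hump_coef j := hump_ratio ^+ j.+1 / hump_weight j.
Definition hump_tol j := hump_coef j * delta / 16.
Definition hump_gap j := 2%:R ^- m0 * (4 * hump_tol j).

Lemma hump_ratio_gt0 : 0 < hump_ratio.
Proof. by have := M_ge0 m0; rewrite /hump_ratio => ?; apply: divr_gt0 => //; lra. Qed.

Lemma hump_ratioMD : hump_ratio * (1 + M m0) = delta / 16.
Proof. by have := M_ge0 m0; rewrite /hump_ratio => ?; field; lra. Qed.

Lemma hump_ratio_le : hump_ratio <= 1 / 16.
Proof.
have := hump_ratioMD; have := hump_ratio_gt0; have := M_ge0 m0.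
by have := delta_le1; nra.
Qed.

Lemma hump_weight_ge k j : (k <= j)%N -> 1 + M k <= hump_weight j.
Proof.
move=> kj; rewrite lerD2l (bigD1 (@Ordinal j.+1 k kj)) //= lerDl.
by apply: sumr_ge0 => i _; exact: M_ge0.
Qed.

Lemma hump_weight_gt0 j : 0 < hump_weight j.
Proof. by have := hump_weight_ge (leq0n j); have := M_ge0 0; lra. Qed.

Lemma hump_weight_le_S j : hump_weight j <= hump_weight j.+1.
Proof. by rewrite lerD2l [leRHS]big_ord_recr /= lerDl. Qed.

Lemma hump_coef_gt0 j : 0 < hump_coef j.
Proof. by rewrite divr_gt0 ?exprn_gt0 ?hump_ratio_gt0 ?hump_weight_gt0. Qed.

Lemma hump_coefS j : hump_coef j.+1 <= hump_ratio * hump_coef j.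
Proof.
have rho_ge0 := ltW hump_ratio_gt0.
rewrite /hump_coef exprS -mulrA ler_wpM2l // ler_wpM2l ?exprn_ge0 //.
by rewrite lef_pV2 ?posrE ?hump_weight_gt0 ?hump_weight_le_S.
Qed.

Lemma hump_coefS_M j : hump_coef j.+1 * M m0 <= hump_tol j.
Proof.
have := hump_coefS j; have := hump_ratioMD; have := hump_coef_gt0 j.
have := hump_coef_gt0 j.+1; have := M_ge0 m0; have := hump_ratio_gt0.
rewrite /hump_tol; nra.
Qed.

Lemma hump_coefS_half j : 2 * hump_coef j.+1 <= hump_coef j.
Proof.
by have := hump_coefS j; have := hump_ratio_le; have := hump_coef_gt0 j; nra.
Qed.

Lemma hump_coefMD k j : (k <= j)%N -> hump_coef j * (1 + M k) <= 2%:R ^- j.+1.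
Proof.
move=> kj; apply: (@le_trans _ _ (hump_ratio ^+ j.+1)).
  rewrite /hump_coef mulrAC ler_pdivrMr ?hump_weight_gt0 //.
  apply: ler_wpM2l; last exact: hump_weight_ge.
  by rewrite exprn_ge0 // ltW // hump_ratio_gt0.
rewrite -exprVn lerXn2r ?nnegrE ?invr_ge0 ?ltW ?hump_ratio_gt0 //.
by have := hump_ratio_le; lra.
Qed.

Lemma hump_coef_le1 j : hump_coef j <= 1.
Proof.
have := hump_coefMD (leq0n j); have := pow2V_le1 R j.+1.
have := hump_coef_gt0 j; have := M_ge0 0; nra.
Qed.

Lemma hump_tol_gt0 j : 0 < hump_tol j.
Proof. by have := mulr_gt0 (hump_coef_gt0 j) delta_gt0; rewrite /hump_tol; lra. Qed.

Lemma hump_tol_le j : hump_tol j <= 1 / 2.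
Proof.
have := hump_coef_le1 j; have := hump_coef_gt0 j; have := delta_le1; have := delta_gt0.
rewrite /hump_tol; nra.
Qed.

Lemma hump_gap_gt0 j : 0 < hump_gap j.
Proof. by rewrite /hump_gap pmulr_rgt0 ?pow2V_gt0 // mulr_gt0 ?hump_tol_gt0. Qed.

Definition hump_step_spec j (s : X) (q : nat * nat) :=
  [/\ N0 q.2, (j <= q.1)%N, (K q.1 <= q.2)%N, j.+1%:R * eps q.1 < hump_gap j
    & exists2 a, A q.1 a & p m0 (s - a) <= 2 * hump_tol j].

Lemma hump_step_exists j s : exists q, hump_step_spec j s q.
Proof.
have [m [a [Ama sa]]] := A_dense s (mulr_gt0 (pow2V_gt0 R m0) (hump_tol_gt0 j)).
have := seminorm_lt_of_fdist hp (hump_tol_gt0 j) (hump_tol_le j) sa.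
have [N1 hN1] := eps_cvg0 (divr_gt0 (hump_gap_gt0 j) (ltr0Sn R j)).
set n' := maxn (maxn m j) N1.
have [n [N0n Kn]] : exists n, N0 n /\ (K n' <= n)%N.
  have [n [N0n /negP]] :=
    infinite_setN0 (infinite_setD N0_infinite (finite_II (K n'))).
  by exists n; split => //; rewrite leqNgt.
exists (n', n); split => //=.
- by rewrite !leq_max leqnn orbT.
- by rewrite -ltr_pdivlMl ?ltr0Sn // mulrC hN1 // leq_maxr.
- exists a; last lra.
  by apply: A_homo Ama; rewrite !leq_max leqnn.
Qed.

Definition hump_step j s := projT1 (cid (hump_step_exists j s)).

Lemma hump_stepP j s : hump_step_spec j s (hump_step j s).
Proof. exact: projT2 (cid _). Qed.

Definition hump_sum j :=
  iteri j (fun i s => s + hump_coef i *: x (hump_step i s).2) 0.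
Definition hump_index j := (hump_step j (hump_sum j)).2.
Definition approx_index j := (hump_step j (hump_sum j)).1.

Lemma hump_sumS j : hump_sum j.+1 = hump_sum j + hump_coef j *: x (hump_index j).
Proof. by []. Qed.

Lemma hump_sum_tailD k m d :
  p k (hump_sum (m + d) - hump_sum m) <= 2 * (hump_coef m - hump_coef (m + d)) * M k.
Proof.
elim: d => [|d IH]; first by rewrite addn0 !subrr seminorm0 // mulr0 mul0r.
rewrite addnS hump_sumS addrAC; apply: le_trans (seminormD (hp k) _ _) _.
rewrite seminormZ // gtr0_norm ?hump_coef_gt0 //.
have [N0n _ _ _ _] := hump_stepP (m + d) (hump_sum (m + d)).
have := x_bounded k N0n; have := hump_coefS_half (m + d).
have := hump_coef_gt0 (m + d); have := M_ge0 k; rewrite /hump_index; nra.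
Qed.

Lemma hump_sum_tail k m n :
  (m <= n)%N -> p k (hump_sum n - hump_sum m) <= 2 * hump_coef m * M k.
Proof.
move=> mn; rewrite -(subnKC mn); apply: le_trans (hump_sum_tailD k m (n - m)) _.
by have := hump_coef_gt0 (m + (n - m)); have := M_ge0 k; nra.
Qed.

Lemma hump_sum_cauchy : fdist_cauchy p hump_sum.
Proof.
apply: (fdist_cauchy_of_tail hp) => k m n km mn.
apply: le_trans (hump_sum_tail k mn) _.
have := hump_coefMD km; rewrite pow2VS.
by have := hump_coef_gt0 m; have := M_ge0 k; nra.
Qed.

Definition hump_limit := projT1 (cid (hcomp hump_sum_cauchy)).

Lemma hump_limitP e :
  0 < e -> exists N, forall n, (N <= n)%N -> fdist p (hump_sum n) hump_limit < e.
Proof. exact: (projT2 (cid (hcomp hump_sum_cauchy)) e). Qed.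

Lemma hump_limit_near j :
  p m0 (hump_limit - hump_sum j.+1) <= 4 * hump_tol j.
Proof.
have [N hN] := hump_limitP (mulr_gt0 (pow2V_gt0 R m0) (hump_tol_gt0 j)).
set n := maxn N j.+1.
have close := seminorm_lt_of_fdist hp (hump_tol_gt0 j) (hump_tol_le j)
  (hN n (leq_maxl _ _)).
have tail := hump_sum_tail m0 (leq_maxr N j.+1).
have -> : hump_limit - hump_sum j.+1 =
    - (hump_sum n - hump_limit) + (hump_sum n - hump_sum j.+1).
  by rewrite opprB addrA subrK.
apply: le_trans (seminormD (hp m0) _ _) _; rewrite seminormN //.
have := hump_coefS_M j; lra.
Qed.

Lemma hump_limit_far j b :
  A (approx_index j) b -> 8 * hump_tol j <= p m0 (hump_limit - b).
Proof.
move=> Ab; have [N0n _ Kn _ [a Aa sa]] := hump_stepP j (hump_sum j).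
have c_gt0 := hump_coef_gt0 j.
have Aba : A (hump_index j) ((hump_coef j)^-1 *: (b - a)).
  apply/A_scale/(A_homo Kn)/A_add => //; rewrite -scaleN1r; exact: A_scale.
set v := hump_coef j *: x (hump_index j).
have spike : hump_coef j * delta <= p m0 (v - (b - a)).
  rewrite -[b - a](scalerKV (lt0r_neq0 c_gt0)) -scalerBr seminormZ // gtr0_norm //.
  rewrite ler_pM2l //; exact: ltW (lt_le_trans (x_far N0n) (Eseminorm_le hp _ _ Aba)).
have := seminorm_sub_le3 (hp m0) hump_limit (hump_sum j) a b v.
rewrite -hump_sumS; have := hump_limit_near j; have := hump_tol_gt0 j.
move: sa; rewrite /hump_tol; lra.
Qed.

Lemma hump_gap_le_Edist j : hump_gap j <= Edist p hump_limit (A (approx_index j)).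
Proof.
have [_ _ _ _ [a Aa _]] := hump_stepP j (hump_sum j).
have tol_gt0 := hump_tol_gt0 j.
apply: le_trans (Edist_ge_of_seminorm hp (t := 8 * hump_tol j) _ _ _ _).
- by apply: ler_wpM2l; [exact/ltW/pow2V_gt0 | lra].
- by exists a.
- lra.
- have := hump_coef_le1 j; have := hump_coef_gt0 j; have := delta_le1.
  rewrite /hump_tol; nra.
- by move=> b /hump_limit_far.
Qed.

Lemma gliding_hump : exists y : X, ~ bigO_seq (fun n => Edist p y (A n)) eps.
Proof.
exists hump_limit; apply: not_bigO_seq => // j; exists (approx_index j).
- by have [] := hump_stepP j (hump_sum j).
- have [_ _ _ eps_gap _] := hump_stepP j (hump_sum j).
  exact: lt_le_trans eps_gap (hump_gap_le_Edist j).
Qed.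

End GlidingHump.

Theorem mainTheorem5 (R : realType) (X : lmodType R) (p : nat -> X -> R)
  (A : nat -> set X) (M : nat -> R) (N0 : set nat) (x : nat -> X)
  (m0 : nat) (delta : R) :
  (forall k, seminorm (p k)) -> separating p -> d_complete p ->
  approx_scheme p A ->
  (forall k, 0 <= M k) -> infinite_set N0 -> 0 < delta ->
  (forall k n, N0 n -> p k (x n) <= M k) ->
  (forall n, N0 n -> delta < Eseminorm p m0 (x n) (A n)) ->
  shapiro p A.
Proof.
move=> hp _ hcomp [A_chain [[K [_ A_add]] [A_scale A_dense]]] M_ge0 N0_infinite
  delta_gt0 x_bounded x_far eps eps_ge0 _ eps_cvg0.
have A_homo : {homo A : i j / (i <= j)%N >-> i `<=` j}.
  apply: homo_leq => [B|B C D /subset_trans|n]; [by []|exact|exact: properW].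
have x_far_min n : N0 n -> minr delta 1 < Eseminorm p m0 (x n) (A n).
  by move=> /x_far; apply: le_lt_trans; rewrite ge_min lexx.
apply: (gliding_hump hp hcomp A_homo A_add A_scale A_dense M_ge0 N0_infinite
  _ _ x_bounded x_far_min eps_ge0 eps_cvg0).
- by rewrite lt_min delta_gt0 ltr01.
- by rewrite ge_min lexx orbT.
Qed.
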